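(* In the monoid $M_n^+$ (defined in the context), with $\delta\equiv a_{n(n-1)}a_{(n-1)(n-2)}\cdots a_{21}$, the following positive equalities hold: $$a_{ts}\delta\doteq\delta a_{(t+1)(s+1)}\ \text{ and }\ b_{ts}\delta\doteq\delta b_{(t+1)(s+1)}\quad\text{for } 1\le s<t<n,$$ $$a_{ns}\delta\doteq\delta a_{(s+1)1}\ \text{ and }\ b_{ns}\delta\doteq\delta b_{(s+1)1}\quad\text{for } 1\le s<n.$$
   Context: Fix $n\ge 2$. Let $M_n^+$ be the monoid with generators $a_{ts}$ and $b_{ts}$ for $1\le s<t\le n$ and relations: $a_{ts}a_{rq}=a_{rq}a_{ts}$, $a_{ts}b_{rq}=b_{rq}a_{ts}$ and $b_{ts}b_{rq}=b_{rq}b_{ts}$ whenever $(t-r)(t-q)(s-r)(s-q)>0$; $a_{ts}a_{sr}=a_{tr}a_{ts}=a_{sr}a_{tr}$ for $1\le r<s<t\le n$; $a_{ts}b_{ts}=b_{ts}a_{ts}$ for $1\le s<t\le n$; $a_{ts}b_{sr}=b_{tr}a_{ts}$, $a_{sr}b_{tr}=b_{ts}a_{sr}$ and $a_{tr}b_{ts}=b_{sr}a_{tr}$ for $1\le r<s<t\le n$. (This is the positive singular braid monoid in Birman–Ko–Lee type generators.) For words $A,B$ in these generators, $A\doteq B$ means they represent the same element of $M_n^+$. *)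

From Stdlib Require Import List Arith ZArith Lia.
Import ListNotations.

(* Generators a_{ts} and b_{ts}; only those with 1 <= s < t <= n occur in
   the defining relations. *)
Inductive gen : Type :=
| ga (t s : nat)
| gb (t s : nat).

Definition word := list gen.

Definition valid (n t s : nat) : Prop := 1 <= s /\ s < t /\ t <= n.

Definition farc (t s r q : nat) : Prop :=
  (0 < (Z.of_nat t - Z.of_nat r) * (Z.of_nat t - Z.of_nat q)
       * (Z.of_nat s - Z.of_nat r) * (Z.of_nat s - Z.of_nat q))%Z.

Inductive drel (n : nat) : word -> word -> Prop :=
| dr_aa t s r q : valid n t s -> valid n r q -> farc t s r q ->
    drel n [ga t s; ga r q] [ga r q; ga t s]
| dr_ab t s r q : valid n t s -> valid n r q -> farc t s r q ->
    drel n [ga t s; gb r q] [gb r q; ga t s]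
| dr_bb t s r q : valid n t s -> valid n r q -> farc t s r q ->
    drel n [gb t s; gb r q] [gb r q; gb t s]
| dr_tri1 r s t : 1 <= r -> r < s -> s < t -> t <= n ->
    drel n [ga t s; ga s r] [ga t r; ga t s]
| dr_tri2 r s t : 1 <= r -> r < s -> s < t -> t <= n ->
    drel n [ga t r; ga t s] [ga s r; ga t r]
| dr_ab_same t s : valid n t s ->
    drel n [ga t s; gb t s] [gb t s; ga t s]
| dr_ab1 r s t : 1 <= r -> r < s -> s < t -> t <= n ->
    drel n [ga t s; gb s r] [gb t r; ga t s]
| dr_ab2 r s t : 1 <= r -> r < s -> s < t -> t <= n ->
    drel n [ga s r; gb t r] [gb t s; ga s r]
| dr_ab3 r s t : 1 <= r -> r < s -> s < t -> t <= n ->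
    drel n [ga t r; gb t s] [gb s r; ga t r].

Inductive peq (n : nat) : word -> word -> Prop :=
| peq_refl u : peq n u u
| peq_sym u v : peq n u v -> peq n v u
| peq_trans u v w : peq n u v -> peq n v w -> peq n u w
| peq_step x u v y : drel n u v -> peq n (x ++ u ++ y) (x ++ v ++ y).

Fixpoint delta (k : nat) : word :=
  match k with
  | 0 => []
  | S k' => match k' with
            | 0 => []
            | S _ => ga k k' :: delta k'
            end
  end.

(* Write c for a or b.  A letter c_{ts} crossing a letter a_{t's'} of delta
   either commutes with it (disjoint index intervals) or is turned into
   another c-letter by one of the relations (r < s < t)
     c_{ts} a_{sr} = a_{sr} c_{tr},  c_{tr} a_{ts} = a_{ts} c_{sr},
     c_{sr} a_{tr} = a_{tr} c_{ts}.
   Pushing c_{ms} through delta_m = a_{m(m-1)} ... a_{(s+1)s} delta_s, the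
   second relation lowers its top index down to c_{(s+1)s}, which commutes
   with a_{(s+1)s}; the first relation then lowers its bottom index through
   delta_s, giving c_{(s+1)1}.  Applied to the first letter of delta_m, this
   second stage gives delta_m = delta_{m-1} a_{m1}.  For t < m, c_{ts}
   commutes with the letters a_{k(k-1)}, k > t+1, of delta_m; then
   delta_{t+1} = delta_t a_{(t+1)1}, the previous case moves c_{ts} through
   delta_t as c_{(s+1)1}, and the third relation gives
     c_{(s+1)1} a_{(t+1)1} = a_{(t+1)1} c_{(t+1)(s+1)}. *)

From Stdlib Require Import List ZArith Lia RelationClasses Morphisms.
Import ListNotations.

#[local] Instance peq_Equivalence n : Equivalence (peq n).
Proof. split; [exact (peq_refl n) | exact (peq_sym n) | exact (peq_trans n)]. Qed.

Lemma peq_congr n x u v y : peq n u v -> peq n (x ++ u ++ y) (x ++ v ++ y).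
Proof.
  intros Huv; revert x y.
  induction Huv as [u|u v _ IH|u v w _ IHuv _ IHvw|x u v y Hd]; intros x0 y0.
  - reflexivity.
  - symmetry; apply IH.
  - etransitivity; [apply IHuv | apply IHvw].
  - replace (x0 ++ (x ++ u ++ y) ++ y0) with ((x0 ++ x) ++ u ++ (y ++ y0))
      by (rewrite !app_assoc; reflexivity).
    replace (x0 ++ (x ++ v ++ y) ++ y0) with ((x0 ++ x) ++ v ++ (y ++ y0))
      by (rewrite !app_assoc; reflexivity).
    apply peq_step, Hd.
Qed.

Lemma peq_app_l n x u v : peq n u v -> peq n (x ++ u) (x ++ v).
Proof. intros Huv; generalize (peq_congr n x u v [] Huv); now rewrite !app_nil_r. Qed.

Lemma peq_cons n g u v : peq n u v -> peq n (g :: u) (g :: v).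
Proof. exact (peq_app_l n [g] u v). Qed.

Lemma peq_app_r n y u v : peq n u v -> peq n (u ++ y) (v ++ y).
Proof. exact (peq_congr n [] u v y). Qed.

#[local] Instance app_peq_Proper n : Proper (peq n ==> peq n ==> peq n) (@app gen).
Proof.
  intros u u' Hu v v' Hv; etransitivity; [apply peq_app_r, Hu | apply peq_app_l, Hv].
Qed.

#[local] Instance cons_peq_Proper n g : Proper (peq n ==> peq n) (cons g).
Proof. intros u v; apply peq_cons. Qed.

Lemma peq_cons2 n g1 g2 h1 h2 y :
  peq n [g1; g2] [h1; h2] -> peq n (g1 :: g2 :: y) (h1 :: h2 :: y).
Proof. exact (peq_app_r n y [g1; g2] [h1; h2]). Qed.

Lemma drel_peq n u v : drel n u v -> peq n u v.
Proof. intros Hd; generalize (peq_step n [] u v [] Hd); now rewrite !app_nil_r. Qed.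

Lemma farc_separated t s r q : s < t -> t < q -> q < r -> farc t s r q.
Proof.
  intros Hst Htq Hqr; unfold farc.
  apply Z.mul_neg_neg; [apply Z.mul_pos_neg; [apply Z.mul_neg_neg|] |]; lia.
Qed.

Lemma farc_sym t s r q : farc t s r q -> farc r q t s.
Proof. unfold farc; intros H; lia. Qed.

Lemma delta_SS k : delta (S (S k)) = ga (S (S k)) (S k) :: delta (S k).
Proof. reflexivity. Qed.

Fixpoint ladder (k i : nat) : word :=
  match k with
  | 0 => []
  | S k' => ga (i + k) (i + k') :: ladder k' i
  end.

Lemma delta_add s k : 1 <= s -> delta (s + k) = ladder k s ++ delta s.
Proof.
  intros Hs; induction k as [|k IH]; [now rewrite Nat.add_0_r|].
  cbn [ladder app]; rewrite <- IH.
  destruct s as [|s]; [lia|].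
  replace (S s + S k) with (S (S (s + k))) by lia.
  rewrite delta_SS; do 2 f_equal; lia.
Qed.

Section PushThroughDelta.

Variable n : nat.
Variable c : nat -> nat -> gen.
Hypothesis c_ab : c = ga \/ c = gb.

Lemma swap_c_ga_same t s : 1 <= s -> s < t -> t <= n ->
  peq n [c t s; ga t s] [ga t s; c t s].
Proof.
  intros; destruct c_ab; subst; [reflexivity|].
  symmetry; apply drel_peq, dr_ab_same; unfold valid; lia.
Qed.

Lemma swap_c_ga_lower r s t : 1 <= r -> r < s -> s < t -> t <= n ->
  peq n [c t s; ga s r] [ga s r; c t r].
Proof.
  intros; destruct c_ab; subst.
  - etransitivity; apply drel_peq; [apply dr_tri1 | apply dr_tri2]; assumption.
  - symmetry; apply drel_peq, dr_ab2; assumption.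
Qed.

Lemma swap_c_ga_upper r s t : 1 <= r -> r < s -> s < t -> t <= n ->
  peq n [c t r; ga t s] [ga t s; c s r].
Proof.
  intros; symmetry; destruct c_ab; subst; apply drel_peq;
    [apply dr_tri1 | apply dr_ab1]; assumption.
Qed.

Lemma swap_c_ga_outer r s t : 1 <= r -> r < s -> s < t -> t <= n ->
  peq n [c s r; ga t r] [ga t r; c t s].
Proof.
  intros; symmetry; destruct c_ab; subst; apply drel_peq;
    [apply dr_tri2 | apply dr_ab3]; assumption.
Qed.

Lemma swap_c_ga_far t s r q : valid n t s -> valid n r q -> farc t s r q ->
  peq n [c t s; ga r q] [ga r q; c t s].
Proof.
  intros; destruct c_ab; subst.
  - apply drel_peq, dr_aa; assumption.
  - symmetry; apply drel_peq, dr_ab; [assumption..| now apply farc_sym].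
Qed.

Lemma push_c_delta_low m j : 1 <= j -> j < m -> m <= n ->
  peq n (c m j :: delta j) (delta j ++ [c m 1]).
Proof.
  induction j as [|[|j] IH]; intros Hj Hjm Hmn; [lia | reflexivity|].
  rewrite delta_SS.
  etransitivity; [apply peq_cons2, swap_c_ga_lower; lia|].
  apply peq_cons, IH; lia.
Qed.

Lemma push_c_ladder s k : 1 <= s -> 1 <= k -> s + k <= n ->
  peq n (c (s + k) s :: ladder k s) (ladder k s ++ [c (s + 1) s]).
Proof.
  induction k as [|[|k] IH]; intros Hs Hk Hn; [lia| |].
  - cbn; rewrite Nat.add_0_r; apply swap_c_ga_same; lia.
  - cbn [ladder app].
    etransitivity; [apply peq_cons2, swap_c_ga_upper; lia|].
    apply peq_cons, IH; lia.
Qed.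

Lemma push_c_delta_top m s : 1 <= s -> s < m -> m <= n ->
  peq n (c m s :: delta m) (delta m ++ [c (s + 1) 1]).
Proof.
  intros Hs Hsm Hmn.
  replace m with (s + (m - s)) by lia.
  rewrite delta_add by lia.
  etransitivity; [apply (peq_app_r n (delta s) (_ :: _)), push_c_ladder; lia|].
  rewrite <- !app_assoc; apply peq_app_l, push_c_delta_low; lia.
Qed.

End PushThroughDelta.

Lemma delta_S_peq n m : 1 <= m -> m < n ->
  peq n (delta (S m)) (delta m ++ [ga (S m) 1]).
Proof.
  intros Hm Hmn; destruct m as [|m]; [lia|].
  rewrite delta_SS; apply push_c_delta_low; auto; lia.
Qed.

Lemma push_c_delta_inner n c (c_ab : c = ga \/ c = gb) m t s :
  1 <= s -> s < t -> t < m -> m <= n ->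
  peq n (c t s :: delta m) (delta m ++ [c (t + 1) (s + 1)]).
Proof.
  intros Hs Hst; induction m as [|[|m] IH]; intros Htm Hmn; [lia..|].
  destruct (Nat.eq_dec t (S m)) as [->|Ht].
  - rewrite (delta_S_peq n (S m)) by lia.
    etransitivity; [apply (peq_app_r n [_] (_ :: _)), push_c_delta_top; auto; lia|].
    rewrite <- !app_assoc; apply peq_app_l.
    replace (S m + 1) with (S (S m)) by lia; apply swap_c_ga_outer; auto; lia.
  - rewrite delta_SS.
    etransitivity.
    { apply peq_cons2, swap_c_ga_far; auto;
        [unfold valid; lia.. | apply farc_separated; lia]. }
    apply peq_cons, IH; lia.
Qed.

Theorem proposition4p2 (n : nat) (hn : 2 <= n) :
  (forall t s : nat, 1 <= s -> s < t -> t < n ->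
     peq n (ga t s :: delta n) (delta n ++ [ga (t + 1) (s + 1)]) /\
     peq n (gb t s :: delta n) (delta n ++ [gb (t + 1) (s + 1)])) /\
  (forall s : nat, 1 <= s -> s < n ->
     peq n (ga n s :: delta n) (delta n ++ [ga (s + 1) 1]) /\
     peq n (gb n s :: delta n) (delta n ++ [gb (s + 1) 1])).
Proof.
  split; intros; split.
  1, 2: apply push_c_delta_inner; auto.
  all: apply push_c_delta_top; auto.
Qed.
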